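(* Let $\nu>0$, let $\mathbf{f}\in L^{\infty}(\mathbb{R}_+;\mathbf{V}_h^* )$, and let $\mathbf{u}_h^{0}=\mathbf{u}_h^{-1}=\mathbf{u}_h^{-2}\in \mathbf{V}_h$ be given initial data. For any time step $\Delta t>0$, let $(\mathbf{u}_h^{n+1},p_h^{n+1})\in \mathbf{X}_h\times Q_h$, $n\ge 0$, be the solution of the extrapolated blended BDF (BLEBDF) scheme for the Navier–Stokes equations: for all $(\mathbf{v}_h,q_h)\in \mathbf{X}_h\times Q_h$, $$\Big(\tfrac{\frac{5}{3}\mathbf{u}_h^{n+1}-\frac{5}{2}\mathbf{u}_h^n+\mathbf{u}_h^{n-1}-\frac{1}{6}\mathbf{u}_h^{n-2}}{\Delta t},\mathbf{v}_h\Big)+\nu(\nabla \mathbf{u}_h^{n+1},\nabla\mathbf{v}_h)+b_1(3\mathbf{u}_h^n-3\mathbf{u}_h^{n-1}+\mathbf{u}_h^{n-2},\mathbf{u}_h^{n+1},\mathbf{v}_h)-(p_h^{n+1},\nabla\cdot\mathbf{v}_h)=(\mathbf{f}^{n+1},\mathbf{v}_h),$$ $$(\nabla\cdot \mathbf{u}_h^{n+1},q_h)=0,$$ where $\mathbf{f}^{n+1}=\mathbf{f}(t^{n+1})$, $t^{n}=n\Delta t$. Set $\mathcal{U}_{k}=[\mathbf{u}_h^{k},\mathbf{u}_h^{k-1},\mathbf{u}_h^{k-2}]^\top$ and $\alpha=\min\{\frac{C_l\nu\Delta t}{16C_P^2},\frac34\}$. Then for every $n\ge 0$, $$\|\mathcal{U}_{n+1}\|_G^2+\frac{\nu\Delta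 t}{4}\|\nabla \mathbf{u}_h^{n+1}\|^2+\frac{\nu\Delta t}{16}\|\nabla\mathbf{u}_h^{n}\|^2\le (1+\alpha)^{-(n+1)}\Big(\|\mathcal{U}_0\|_G^2+\frac{\nu\Delta t}{4}\|\nabla\mathbf{u}_h^{0}\|^2+\frac{\nu\Delta t}{16}\|\nabla\mathbf{u}_h^{-1}\|^2\Big)+\max\Big\{\frac{8C_P^2}{C_l\nu^2},\frac{2\nu^{-1}\Delta t}{3}\Big\}\|\mathbf{f}\|^2_{L^\infty(\mathbb{R}_+;\mathbf{V}_h^* )}.$$
   Context: $\Omega\subset\mathbb{R}^d$, $d\in\{2,3\}$, is a bounded connected Lipschitz domain; $\|\cdot\|$ and $(\cdot,\cdot)$ denote the $L^2(\Omega)$ norm and inner product. $\mathbf{X}=(H^1_0(\Omega))^d$, $Q=L^2_0(\Omega)$ (mean-zero $L^2$ functions). $C_P$ is the Poincaré–Friedrichs constant: $\|\mathbf{v}\|\le C_P\|\nabla\mathbf{v}\|$ for all $\mathbf{v}\in\mathbf{X}$ (also for scalar $H^1_0$ functions). $\mathbf{X}_h\subset\mathbf{X}$, $Q_h\subset Q$ are conforming finite element spaces on a regular triangulation satisfying the discrete inf-sup condition, and $\mathbf{V}_h=\{\mathbf{v}_h\in\mathbf{X}_h:(\nabla\cdot\mathbf{v}_h,q_h)=0\ \forall q_h\in Q_h\}$. The dual norm is $\|\mathbf{f}\|_{\mathbf{V}_h^*}=\sup_{0\ne\mathbf{v}_h\in\mathbf{V}_h}(\mathbf{f},\mathbf{v}_h)/\|\nabla\mathbf{v}_h\|$,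 and $L^\infty(\mathbb{R}_+;\mathbf{V}_h^* )$ is the space of $\mathbf{f}$ with $\|\mathbf{f}\|_{L^\infty(\mathbb{R}_+;\mathbf{V}_h^* )}:=\operatorname{ess\,sup}_{t>0}\|\mathbf{f}(t)\|_{\mathbf{V}_h^*}<\infty$ (and the bound holds at each $t^{n}$). The skew-symmetric trilinear form is $b_1(\mathbf{u},\mathbf{v},\mathbf{w})=\frac12\big(((\mathbf{u}\cdot\nabla)\mathbf{v},\mathbf{w})-((\mathbf{u}\cdot\nabla)\mathbf{w},\mathbf{v})\big)$. The $G$-matrix is $G=\frac{1}{12}\begin{pmatrix}19&-12&3\\-12&10&-3\\3&-3&1\end{pmatrix}$, and for $\mathcal{W}=[w_1,w_2,w_3]^\top$ with $w_i\in L^2(\Omega)$ (scalar or vector), $\|\mathcal{W}\|_G^2=\sum_{i,j=1}^3G_{ij}(w_i,w_j)$. The constants $0<C_l<C_u$ satisfy $C_l\|\mathcal{W}\|_G^2\le\|\mathcal{W}\|^2\le C_u\|\mathcal{W}\|_G^2$ for all such $\mathcal{W}$, where $\|\mathcal{W}\|^2=\sum_i\|w_i\|^2$. *)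

From Stdlib Require Export Reals ZArith.
Open Scope R_scope.

(* X  : carrier of the discrete velocity space X_h  (subset of (H^1_0)^d)
   Q  : carrier of the discrete pressure space Q_h  (subset of L^2_0)
   ip v w   = (v, w)              (L^2 inner product)
   gip v w  = (grad v, grad w)    (H^1_0 inner product)
   divp v q = (div v, q)
   conv u v w = ((u . grad) v, w) (convective trilinear form)
   qip p q  = (p, q)              (L^2 inner product on Q_h)            *)
Record FESpace := {
  X : Type;
  Q : Type;
  vzero : X;
  vadd : X -> X -> X;
  vscal : R -> X -> X;
  ip : X -> X -> R;
  gip : X -> X -> R;
  divp : X -> Q -> R;
  conv : X -> X -> X -> R;
  qip : Q -> Q -> R
}.

Arguments vzero {_}. Arguments vadd {_}. Arguments vscal {_}.
Arguments ip {_}. Arguments gip {_}. Arguments divp {_}.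
Arguments conv {_}. Arguments qip {_}.

Record FEAxioms (FS : FESpace) : Prop := {
  vadd_assoc : forall a b c : X FS, vadd a (vadd b c) = vadd (vadd a b) c;
  vadd_comm : forall a b : X FS, vadd a b = vadd b a;
  vadd_0 : forall a : X FS, vadd a vzero = a;
  vadd_opp : forall a : X FS, vadd a (vscal (-1) a) = vzero;
  vscal_1 : forall a : X FS, vscal 1 a = a;
  vscal_assoc : forall r s (a : X FS), vscal r (vscal s a) = vscal (r * s) a;
  vscal_addr : forall r (a b : X FS), vscal r (vadd a b) = vadd (vscal r a) (vscal r b);
  vscal_addl : forall r s (a : X FS), vscal (r + s) a = vadd (vscal r a) (vscal s a);
  ip_sym : forall a b : X FS, ip a b = ip b a;
  ip_add : forall a b c : X FS, ip (vadd a b) c = ip a c + ip b c;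
  ip_scal : forall r (a b : X FS), ip (vscal r a) b = r * ip a b;
  ip_nonneg : forall a : X FS, 0 <= ip a a;
  gip_sym : forall a b : X FS, gip a b = gip b a;
  gip_add : forall a b c : X FS, gip (vadd a b) c = gip a c + gip b c;
  gip_scal : forall r (a b : X FS), gip (vscal r a) b = r * gip a b;
  gip_nonneg : forall a : X FS, 0 <= gip a a;
  divp_add : forall (a b : X FS) q, divp (vadd a b) q = divp a q + divp b q;
  divp_scal : forall r (a : X FS) q, divp (vscal r a) q = r * divp a q;
  conv_add1 : forall a b c d : X FS, conv (vadd a b) c d = conv a c d + conv b c d;
  conv_scal1 : forall r (a c d : X FS), conv (vscal r a) c d = r * conv a c d;
  conv_add2 : forall a b c d : X FS, conv c (vadd a b) d = conv c a d + conv c b d;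
  conv_scal2 : forall r (a c d : X FS), conv c (vscal r a) d = r * conv c a d;
  conv_add3 : forall a b c d : X FS, conv c d (vadd a b) = conv c d a + conv c d b;
  conv_scal3 : forall r (a c d : X FS), conv c d (vscal r a) = r * conv c d a;
  qip_nonneg : forall q : Q FS, 0 <= qip q q;
  inf_sup : exists beta, 0 < beta /\
     forall q : Q FS, exists v : X FS, 0 < gip v v /\
       beta * sqrt (qip q q) * sqrt (gip v v) <= divp v q
}.

Definition b1 {FS : FESpace} (u v w : X FS) : R :=
  / 2 * (conv u v w - conv u w v).

Definition in_Vh {FS : FESpace} (v : X FS) : Prop :=
  forall q : Q FS, divp v q = 0.

Definition Gmat (i j : nat) : R :=
  match i, j with
  | 1, 1 => 19/12 | 1, 2 => -12/12 | 1, 3 => 3/12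
  | 2, 1 => -12/12 | 2, 2 => 10/12 | 2, 3 => -3/12
  | 3, 1 => 3/12 | 3, 2 => -3/12 | 3, 3 => 1/12
  | _, _ => 0
  end.

Definition Gnorm2 {FS : FESpace} (w1 w2 w3 : X FS) : R :=
  let w i := match i with 1%nat => w1 | 2%nat => w2 | _ => w3 end in
  sum_f_R0 (fun i => sum_f_R0 (fun j =>
     Gmat (Datatypes.S i) (Datatypes.S j) * ip (w (Datatypes.S i)) (w (Datatypes.S j))) 2) 2.

Definition L2sq3 {FS : FESpace} (w1 w2 w3 : X FS) : R :=
  ip w1 w1 + ip w2 w2 + ip w3 w3.

Definition vlin4 {FS : FESpace} (a : R) (x : X FS) (b : R) (y : X FS)
  (c : R) (z : X FS) (d : R) (w : X FS) : X FS :=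
  vadd (vadd (vadd (vscal a x) (vscal b y)) (vscal c z)) (vscal d w).

Definition vlin3 {FS : FESpace} (a : R) (x : X FS) (b : R) (y : X FS)
  (c : R) (z : X FS) : X FS :=
  vadd (vadd (vscal a x) (vscal b y)) (vscal c z).

(* Testing the scheme with v = u^{n+1} kills the pressure (u^{n+1} is discretely
   divergence free) and the skew-symmetric convection term.  The BDF3-type time
   difference satisfies an exact G-stability identity, so the G-norm of the
   three-level state drops by the viscous dissipation up to a Young-absorbed
   forcing term.  Poincaré and the G-norm equivalence turn part of the
   dissipation into a fraction alpha of the energy itself, which gives the
   contraction (1 + alpha) E_{n+1} <= E_n + dt |f|^2 / (2 nu); summing the
   geometric series yields the bound, with the constant (dt/(2 nu)) / alpha. *)
From Stdlib Require Import Reals ZArith Lra.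
Open Scope R_scope.

Section GStability.

Variable FS : FESpace.
Hypothesis HS : FEAxioms FS.

Lemma ip_add_r (a b c : X FS) : ip a (vadd b c) = ip a b + ip a c.
Proof.
rewrite (ip_sym _ HS a), (ip_sym _ HS a b), (ip_sym _ HS a c).
apply (ip_add _ HS).
Qed.

Lemma ip_scal_r r (a b : X FS) : ip a (vscal r b) = r * ip a b.
Proof. rewrite (ip_sym _ HS a), (ip_sym _ HS a b). apply (ip_scal _ HS). Qed.

Lemma b1_diag (w a : X FS) : b1 w a a = 0.
Proof. unfold b1. lra. Qed.

Lemma bdf3_G_identity (a b c d : X FS) :
  ip (vlin4 (5/3) a (-(5/2)) b 1 c (-(1/6)) d) a
  = Gnorm2 a b c - Gnorm2 b c d
    + / 12 * ip (vlin4 1 a (-3) b 3 c (-1) d) (vlin4 1 a (-3) b 3 c (-1) d).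
Proof.
unfold Gnorm2, vlin4; simpl.
rewrite ?(ip_add _ HS), ?(ip_scal _ HS), ?ip_add_r, ?ip_scal_r.
rewrite ?(ip_add _ HS), ?(ip_scal _ HS), ?ip_add_r, ?ip_scal_r.
rewrite (ip_sym _ HS b a), (ip_sym _ HS c a), (ip_sym _ HS d a),
  (ip_sym _ HS c b), (ip_sym _ HS d b), (ip_sym _ HS d c).
field.
Qed.

Lemma bdf3_G_stability (a b c d : X FS) :
  Gnorm2 a b c - Gnorm2 b c d <= ip (vlin4 (5/3) a (-(5/2)) b 1 c (-(1/6)) d) a.
Proof.
rewrite bdf3_G_identity.
pose proof (ip_nonneg _ HS (vlin4 1 a (-3) b 3 c (-1) d)).
lra.
Qed.

Lemma young_sqrt (F nu g : R) :
  0 < nu -> 0 <= g -> F * sqrt g <= nu / 2 * g + F ^ 2 / (2 * nu).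
Proof.
intros Hnu Hg.
rewrite <- (sqrt_sqrt g Hg) at 2.
apply (Rmult_le_reg_l (2 * nu)); [lra|].
replace (2 * nu * (nu / 2 * (sqrt g * sqrt g) + F ^ 2 / (2 * nu)))
  with (nu ^ 2 * (sqrt g * sqrt g) + F ^ 2) by (field; lra).
pose proof (pow2_ge_0 (nu * sqrt g - F)).
nra.
Qed.

Lemma bdf3_energy_inequality (nu dt F rhs : R) (a b c d w : X FS) (q : Q FS) :
  0 < nu -> 0 < dt -> in_Vh a ->
  ip (vlin4 (5/3) a (-(5/2)) b 1 c (-(1/6)) d) a / dt
    + nu * gip a a + b1 w a a - divp a q = rhs ->
  rhs <= F * sqrt (gip a a) ->
  Gnorm2 a b c - Gnorm2 b c d + nu * dt / 2 * gip a a <= dt * F ^ 2 / (2 * nu).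
Proof.
intros Hnu Hdt Ha Hmom Hrhs.
rewrite b1_diag, (Ha q) in Hmom.
pose proof (bdf3_G_stability a b c d) as HG.
pose proof (young_sqrt F nu (gip a a) Hnu (gip_nonneg _ HS a)) as Hy.
set (I := ip _ a) in *.
assert (HI : I = dt * (rhs - nu * gip a a)) by (rewrite <- Hmom; field; lra).
replace (dt * F ^ 2 / (2 * nu)) with (dt * (F ^ 2 / (2 * nu))) by (field; lra).
nra.
Qed.

End GStability.

Lemma energy_contraction (Cl CP nu dt alpha K Ga Gb ga gb gc : R) :
  0 < Cl -> 0 < CP -> 0 < nu -> 0 < dt -> 0 <= alpha ->
  alpha <= Cl * nu * dt / (16 * CP ^ 2) -> alpha <= 3/4 ->
  0 <= ga -> 0 <= gb -> 0 <= gc ->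
  Cl * Ga <= CP ^ 2 * (ga + gb + gc) ->
  Ga - Gb + nu * dt / 2 * ga <= K ->
  (1 + alpha) * (Ga + nu * dt / 4 * ga + nu * dt / 16 * gb)
  <= Gb + nu * dt / 4 * gb + nu * dt / 16 * gc + K.
Proof.
intros HCl HCP Hnu Hdt Hal0 HalA Hal34 Hga Hgb Hgc HG Henergy.
assert (Hnd : 0 <= nu * dt) by nra.
assert (HalG : alpha * Ga <= nu * dt / 16 * (ga + gb + gc)).
{ assert (HCP2 : 0 < CP ^ 2) by (apply pow_lt; lra).
  assert (Hal : alpha * (16 * CP ^ 2) <= Cl * nu * dt).
  { apply (Rmult_le_reg_r (/ (16 * CP ^ 2))); [apply Rinv_0_lt_compat; lra|].
    replace (alpha * (16 * CP ^ 2) * / (16 * CP ^ 2)) with alpha by (field; lra).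
    exact HalA. }
  apply (Rmult_le_reg_l Cl); [lra|].
  pose proof (Rmult_le_compat_l alpha _ _ Hal0 HG).
  pose proof (Rmult_le_compat_r (ga + gb + gc) _ _ ltac:(lra) Hal).
  nra. }
assert (alpha * (nu * dt * ga) <= 3/4 * (nu * dt * ga))
  by (apply Rmult_le_compat_r; [apply Rmult_le_pos|]; lra).
assert (alpha * (nu * dt * gb) <= 3/4 * (nu * dt * gb))
  by (apply Rmult_le_compat_r; [apply Rmult_le_pos|]; lra).
assert (0 <= nu * dt * gb) by (apply Rmult_le_pos; lra).
lra.
Qed.

Lemma geometric_decay (E : nat -> R) (r K : R) :
  0 < r -> 0 <= K ->
  (forall m, (1 + r) * E (S m) <= E m + K) ->
  forall m, E m <= / (1 + r) ^ m * E O + K / r.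
Proof.
intros Hr HK Hstep m.
induction m as [|m IH].
- simpl. rewrite Rinv_1.
  assert (0 <= K / r)
    by (apply Rmult_le_pos; [lra | apply Rlt_le, Rinv_0_lt_compat; lra]).
  lra.
- assert (Hpos : 0 < (1 + r) ^ m) by (apply pow_lt; lra).
  apply (Rmult_le_reg_l (1 + r)); [lra|].
  apply Rle_trans with (E m + K); [apply Hstep|].
  replace ((1 + r) * (/ (1 + r) ^ S m * E O + K / r))
    with (/ (1 + r) ^ m * E O + K / r + K) by (simpl; field; lra).
  lra.
Qed.

Lemma Rdiv_Rmin (K x y : R) :
  0 <= K -> 0 < x -> 0 < y -> K / Rmin x y = Rmax (K / x) (K / y).
Proof.
intros HK Hx Hy.
apply Rmin_case_strong; intro Hxy.
- rewrite Rmax_left; [reflexivity|].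
  apply Rmult_le_compat_l; [lra|]. apply Rinv_le_contravar; lra.
- rewrite Rmax_right; [reflexivity|].
  apply Rmult_le_compat_l; [lra|]. apply Rinv_le_contravar; lra.
Qed.

Theorem theorem1
  (FS : FESpace) (HS : FEAxioms FS)
  (CP Cl Cu : R) (HCP : 0 < CP)
  (HPoinc : forall v : X FS, ip v v <= CP ^ 2 * gip v v)
  (HCl : 0 < Cl) (HClu : Cl < Cu)
  (HGeq : forall w1 w2 w3 : X FS,
      Cl * Gnorm2 w1 w2 w3 <= L2sq3 w1 w2 w3 /\
      L2sq3 w1 w2 w3 <= Cu * Gnorm2 w1 w2 w3)
  (nu dt : R) (Hnu : 0 < nu) (Hdt : 0 < dt)
  (f : R -> X FS -> R)
  (Hf_lin : forall t (a b : X FS) r,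
      f t (vadd a b) = f t a + f t b /\ f t (vscal r a) = r * f t a)
  (Fnorm : R) (HF0 : 0 <= Fnorm)
  (HF : forall k : nat, forall v : X FS, in_Vh v ->
      Rabs (f (INR (S k) * dt) v) <= Fnorm * sqrt (gip v v))
  (u : Z -> X FS) (p : Z -> Q FS)
  (Hinit1 : u 0%Z = u (-1)%Z) (Hinit2 : u (-1)%Z = u (-2)%Z)
  (Hinit3 : in_Vh (u 0%Z))
  (Hmom : forall n : nat, let N := Z.of_nat n in
     forall v : X FS,
       ip (vlin4 (5/3) (u (N + 1)%Z) (-(5/2)) (u N) 1 (u (N - 1)%Z)
                 (-(1/6)) (u (N - 2)%Z)) v / dt
       + nu * gip (u (N + 1)%Z) v
       + b1 (vlin3 3 (u N) (-3) (u (N - 1)%Z) 1 (u (N - 2)%Z)) (u (N + 1)%Z) v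
       - divp v (p (N + 1)%Z)
       = f (INR (S n) * dt) v)
  (Hdiv : forall n : nat, forall q : Q FS, divp (u (Z.of_nat n + 1)%Z) q = 0) :
  let alpha := Rmin (Cl * nu * dt / (16 * CP ^ 2)) (3/4) in
  forall n : nat, let N := Z.of_nat n in
    Gnorm2 (u (N + 1)%Z) (u N) (u (N - 1)%Z)
    + nu * dt / 4 * gip (u (N + 1)%Z) (u (N + 1)%Z)
    + nu * dt / 16 * gip (u N) (u N)
    <= / (1 + alpha) ^ (S n) *
         (Gnorm2 (u 0%Z) (u (-1)%Z) (u (-2)%Z)
          + nu * dt / 4 * gip (u 0%Z) (u 0%Z)
          + nu * dt / 16 * gip (u (-1)%Z) (u (-1)%Z))
       + Rmax (8 * CP ^ 2 / (Cl * nu ^ 2)) (2 * / nu * dt / 3) * Fnorm ^ 2.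
Proof.
intros alpha.
assert (HA : 0 < Cl * nu * dt / (16 * CP ^ 2))
  by (assert (0 < CP ^ 2) by (apply pow_lt; lra);
      apply Rdiv_lt_0_compat; [|lra]; repeat apply Rmult_lt_0_compat; lra).
assert (Halpha : 0 < alpha) by (apply Rmin_glb_lt; lra).
set (K := dt * Fnorm ^ 2 / (2 * nu)).
assert (HK : 0 <= K)
  by (apply Rmult_le_pos; [nra | apply Rlt_le, Rinv_0_lt_compat; lra]).
set (E := fun m : nat => let M := Z.of_nat m in
  Gnorm2 (u M) (u (M - 1)%Z) (u (M - 2)%Z)
  + nu * dt / 4 * gip (u M) (u M) + nu * dt / 16 * gip (u (M - 1)%Z) (u (M - 1)%Z)).
assert (Hstep : forall m, (1 + alpha) * E (S m) <= E m + K).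
{ intro m. unfold E. cbv zeta.
  rewrite Nat2Z.inj_succ, <- Z.add_1_r, Z.add_simpl_r.
  replace (Z.of_nat m + 1 - 2)%Z with (Z.of_nat m - 1)%Z by ring.
  set (N := Z.of_nat m).
  assert (Ha : in_Vh (u (N + 1)%Z)) by (intro q; apply Hdiv).
  destruct (HGeq (u (N + 1)%Z) (u N) (u (N - 1)%Z)) as [HCl3 _].
  unfold L2sq3 in HCl3.
  pose proof (HPoinc (u (N + 1)%Z)). pose proof (HPoinc (u N)).
  pose proof (HPoinc (u (N - 1)%Z)).
  apply (energy_contraction Cl CP); try apply (gip_nonneg _ HS); try lra;
    [apply Rmin_l | apply Rmin_r |].
  apply (bdf3_energy_inequality FS HS nu dt Fnorm (f (INR (S m) * dt) (u (N + 1)%Z))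
    _ _ _ _ (vlin3 3 (u N) (-3) (u (N - 1)%Z) 1 (u (N - 2)%Z)) (p (N + 1)%Z));
    try lra; [exact Ha | apply (Hmom m) |].
  eapply Rle_trans; [apply Rle_abs | apply (HF m _ Ha)]. }
intros n N.
pose proof (geometric_decay E alpha K Halpha HK Hstep (S n)) as Hdecay.
unfold E in Hdecay; cbv zeta in Hdecay.
rewrite Nat2Z.inj_succ, <- Z.add_1_r, Z.add_simpl_r in Hdecay.
replace (Z.of_nat n + 1 - 2)%Z with (Z.of_nat n - 1)%Z in Hdecay by ring.
replace (K / alpha) with (Rmax (8 * CP ^ 2 / (Cl * nu ^ 2)) (2 * / nu * dt / 3) * Fnorm ^ 2)
  in Hdecay; [exact Hdecay|].
unfold alpha; rewrite Rdiv_Rmin by lra.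
rewrite Rmult_comm, <- RmaxRmult by nra.
unfold K; f_equal; field; repeat split; nra.
Qed.
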